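(* Let $\underline\phi\le\overline\phi$ and $\underline\psi\le\overline\psi$ be functions on $[0,1]$ satisfying (P1)–(P3), and let \[\mathcal C^{\mathrm M}=\{C^{\mathrm M}_{\phi,\psi}:\ \underline\phi\le\phi\le\overline\phi,\ \underline\psi\le\psi\le\overline\psi,\ \phi,\psi \text{ satisfy (P1)–(P3)}\}.\] Then $\mathcal C^{\mathrm M}$ has a pointwise minimal and maximal element, namely $\min\mathcal C^{\mathrm M}=C^{\mathrm M}_{\underline\phi,\underline\psi}$ and $\max\mathcal C^{\mathrm M}=C^{\mathrm M}_{\overline\phi,\overline\psi}$, i.e. $C^{\mathrm M}_{\underline\phi,\underline\psi}(u,v)\le C^{\mathrm M}_{\phi,\psi}(u,v)\le C^{\mathrm M}_{\overline\phi,\overline\psi}(u,v)$ for all $C^{\mathrm M}_{\phi,\psi}\in\mathcal C^{\mathrm M}$ and $u,v\in[0,1]$.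
   Context: Conditions on $\phi,\psi:[0,1]\to\mathbb R$: (P1) non-decreasing; (P2) $\phi(0)=\psi(0)=0$, $\phi(1)=\psi(1)=1$; (P3) $\phi(u)/u$ and $\psi(v)/v$ are non-increasing on $(0,1]$ (values in $[1,\infty]$). Marshall's copula: $C^{\mathrm M}_{\phi,\psi}(u,v)=uv\min\{\phi(u)/u,\psi(v)/v\}$ if $uv>0$, and $0$ if $uv=0$. *)

From mathcomp Require Import all_boot all_order all_algebra.
Set Implicit Arguments. Unset Strict Implicit. Unset Printing Implicit Defensive.
Import Order.TTheory GRing.Theory Num.Theory.
Local Open Scope ring_scope.

(* Conditions (P1)-(P3) on f : [0,1] -> R (f is given as a total function R -> R,
   only its values on [0,1] matter). *)
Definition P123 (R : realFieldType) (f : R -> R) : Prop :=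
  (forall x y : R, 0 <= x -> x <= y -> y <= 1 -> f x <= f y) /\
  f 0 = 0 /\ f 1 = 1 /\
  (forall x y : R, 0 < x -> x <= y -> y <= 1 -> f y / y <= f x / x).

Definition marshall (R : realFieldType) (phi psi : R -> R) (u v : R) : R :=
  if 0 < u * v then u * v * Num.min (phi u / u) (psi v / v) else 0.

Definition fle01 (R : realFieldType) (f g : R -> R) : Prop :=
  forall x : R, 0 <= x -> x <= 1 -> f x <= g x.

From mathcomp Require Import all_boot all_order all_algebra.
Import Order.TTheory GRing.Theory Num.Theory.
Local Open Scope ring_scope.

Lemma marshall_le (R : realFieldType) (phi1 phi2 psi1 psi2 : R -> R) (u v : R) :
  fle01 phi1 phi2 -> fle01 psi1 psi2 ->
  0 <= u -> u <= 1 -> 0 <= v -> v <= 1 ->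
  marshall phi1 psi1 u v <= marshall phi2 psi2 u v.
Proof.
move=> le_phi le_psi u0 u1 v0 v1; rewrite /marshall.
case: ifP => // /ltW uv_ge0; rewrite ler_wpM2l //.
have le_phi_u : phi1 u / u <= phi2 u / u by rewrite ler_wpM2r ?invr_ge0 ?le_phi.
have le_psi_v : psi1 v / v <= psi2 v / v by rewrite ler_wpM2r ?invr_ge0 ?le_psi.
by rewrite le_min !ge_min le_phi_u le_psi_v orbT.
Qed.

Theorem proposition6 (R : realFieldType)
  (phiL phiU psiL psiU : R -> R)
  (hphiL : P123 phiL) (hphiU : P123 phiU) (hpsiL : P123 psiL) (hpsiU : P123 psiU)
  (hphiLU : fle01 phiL phiU) (hpsiLU : fle01 psiL psiU) :
  forall phi psi : R -> R,
    P123 phi -> P123 psi ->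
    fle01 phiL phi -> fle01 phi phiU ->
    fle01 psiL psi -> fle01 psi psiU ->
    forall u v : R, 0 <= u -> u <= 1 -> 0 <= v -> v <= 1 ->
      marshall phiL psiL u v <= marshall phi psi u v /\
      marshall phi psi u v <= marshall phiU psiU u v.
Proof.
move=> phi psi _ _ le_phiL le_phiU le_psiL le_psiU u v u0 u1 v0 v1.
by split; apply: marshall_le.
Qed.
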